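(* For every $A>0$ there is a constant $C$ depending only on $A$ such that if $|c|\le A$, then every $C^1$ solution $U$ of $(1-x^2)U'+2xU+\frac12U^2=P_c(x)$ in $(-1,1)$ satisfies $|U(x)|\le C$ for all $-1<x<1$.
   Context: $c=(c_1,c_2,c_3)\in\mathbb{R}^3$ and $P_c(x):=c_1(1-x)+c_2(1+x)+c_3(1-x^2)$. *)

From Stdlib Require Import Reals.
From Coquelicot Require Import Coquelicot.
Open Scope R_scope.

Definition Pc (c1 c2 c3 x : R) : R :=
  c1 * (1 - x) + c2 * (1 + x) + c3 * (1 - x ^ 2).

Definition norm3 (c1 c2 c3 : R) : R := sqrt (c1 ^ 2 + c2 ^ 2 + c3 ^ 2).

Definition C1_on_open_interval (U U' : R -> R) : Prop :=
  forall x, -1 < x < 1 -> is_derive U x (U' x) /\ continuous U' x.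

(** Where [U >= 8 + M] the quadratic term of the Riccati equation dominates,
    so [(1 - x^2) U' <= - U^2 / 4]: a large value of [U] at [x0] persists on
    all of [(-1, x0]], and there [1/U - ln (1 + x) / 8] is nondecreasing.
    Letting [x -> -1] forces [1/U] negative, a contradiction; hence
    [U <= 8 + M].  The reflection [x |-> -U (-x)] preserves the equation and
    turns this into the lower bound [U >= -(8 + M)].  With [P_c <= 3 |c|] on
    [(-1, 1)] one can take [C = 8 + 3 A]. *)

From Stdlib Require Import Reals Lra.
From Coquelicot Require Import Coquelicot.
Open Scope R_scope.

Lemma continuity_pt_of_is_derive (f : R -> R) (x l : R) :
  is_derive f x l -> continuity_pt f x.
Proof.
  intros Hf; apply continuity_pt_filterlim.
  apply (ex_derive_continuous (V := R_NormedModule)); now exists l.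
Qed.

Lemma is_derive_neg_gt_left (f : R -> R) (m l a : R) :
  is_derive f m l -> l < 0 -> a < m -> exists y, a <= y < m /\ f m < f y.
Proof.
  intros Hf Hl Ham.
  apply is_derive_Reals in Hf.
  destruct (Hf (- l / 2)) as [d Hd]; [lra|].
  pose proof (cond_pos d) as Hd0.
  set (r := Rmin (d / 2) (m - a)).
  assert (Hr : 0 < r <= d / 2 /\ r <= m - a).
  { unfold r; split; [split|]; [apply Rmin_pos| apply Rmin_l | apply Rmin_r]; lra. }
  assert (Hslope : Rabs ((f (m - r) - f m) / - r - l) < - l / 2).
  { replace (m - r) with (m + - r) by ring.
    apply Hd; [intro; lra|]. rewrite Rabs_Ropp, Rabs_pos_eq; lra. }
  exists (m - r); split; [lra|].
  apply Rabs_def2 in Hslope as [Hslope _].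
  assert (Hq : (f (m - r) - f m) / - r < 0) by lra.
  assert (E : f (m - r) - f m = (f (m - r) - f m) / - r * - r) by (field; lra).
  nra.
Qed.

Lemma ge_left_of_derive_neg_above (f f' : R -> R) (a b K x0 : R) :
  (forall t, a < t < b -> is_derive f t (f' t)) ->
  (forall t, a < t < b -> K < f t -> f' t < 0) ->
  x0 < b -> K < f x0 -> forall t, a < t <= x0 -> f x0 <= f t.
Proof.
  intros Hf Hneg Hx0 HK t Ht.
  destruct (Rle_or_lt (f x0) (f t)) as [Hle|Hlt]; [exact Hle|exfalso].
  destruct (continuity_ab_maj f t x0) as [m [Hmax Hm]]; [lra| |].
  { intros s Hs; apply (continuity_pt_of_is_derive f s (f' s)), Hf; lra. }
  assert (Hfm : f x0 <= f m) by (apply Hmax; lra).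
  assert (Htm : t < m) by (destruct (Req_dec t m) as [<-|]; lra).
  destruct (is_derive_neg_gt_left f m (f' m) t) as [y [Hy Hfy]];
    [apply Hf; lra | apply Hneg; lra | lra |].
  assert (f y <= f m) by (apply Hmax; lra).
  lra.
Qed.

Lemma nondecreasing_of_derive_nonneg (f f' : R -> R) (a b : R) :
  a <= b -> (forall t, a <= t <= b -> is_derive f t (f' t) /\ 0 <= f' t) ->
  f a <= f b.
Proof.
  intros Hab Hf.
  destruct (MVT_gen f a b f') as [c [Hc Hmvt]];
    rewrite ?Rmin_left, ?Rmax_right in * by lra.
  - intros t Ht; apply Hf; lra.
  - intros t Ht; apply (continuity_pt_of_is_derive f t (f' t)), Hf; lra.
  - assert (0 <= f' c * (b - a)) by (apply Rmult_le_pos; [apply Hf|]; lra).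
    lra.
Qed.

Definition riccati (U U' : R -> R) (x : R) : R :=
  (1 - x ^ 2) * U' x + 2 * x * U x + / 2 * U x ^ 2.

Lemma riccati_reflect (U U' : R -> R) (x : R) :
  riccati (fun y => - U (- y)) (fun y => U' (- y)) x = riccati U U' (- x).
Proof. unfold riccati; ring. Qed.

Lemma is_derive_reflect (U : R -> R) (x l : R) :
  is_derive U (- x) l -> is_derive (fun y => - U (- y)) x l.
Proof.
  intros HU.
  assert (Hcomp : is_derive (fun y => U (- y)) x (-1 * l)).
  { apply (is_derive_comp U Ropp); [exact HU|].
    auto_derive; [exact I | ring]. }
  replace l with (- (-1 * l)) by ring.
  exact (is_derive_opp _ _ _ Hcomp).
Qed.

Lemma riccati_quadratic_dominates (M t u v : R) :
  0 <= M -> -1 < t < 1 -> 8 + M <= u ->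
  (1 - t ^ 2) * v + 2 * t * u + / 2 * u ^ 2 <= M ->
  (1 - t ^ 2) * v <= - u ^ 2 / 4.
Proof.
  intros HM Ht Hu Hric.
  assert (0 <= (u - 8) * (u / 4 - 2)) by (apply Rmult_le_pos; lra).
  nra.
Qed.

(** [- v / u^2 - 1 / (8 (1 + t))] is the derivative of [1/U - ln (1 + t) / 8]. *)
Lemma riccati_lyapunov_derive_nonneg (t u v : R) :
  -1 < t < 1 -> 0 < u -> (1 - t ^ 2) * v <= - u ^ 2 / 4 ->
  0 <= - v / u ^ 2 - / (8 * (1 + t)).
Proof.
  intros Ht Hu Hv.
  assert (Hv' : - v * (1 + t) * (1 - t) >= u ^ 2 / 4) by lra.
  assert (Hp : 0 < - v * (1 + t)) by nra.
  assert (Hu2 : 0 < u ^ 2) by nra.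
  replace (- v / u ^ 2 - / (8 * (1 + t)))
    with ((8 * (- v * (1 + t)) - u ^ 2) / (8 * (1 + t) * u ^ 2)) by (field; lra).
  apply Rmult_le_pos.
  - nra.
  - apply Rlt_le, Rinv_0_lt_compat; nra.
Qed.

Section RiccatiUpperBound.

Variables (M : R) (U U' : R -> R).
Hypothesis M_ge0 : 0 <= M.
Hypothesis U_derive : forall x, -1 < x < 1 -> is_derive U x (U' x).
Hypothesis riccati_le : forall x, -1 < x < 1 -> riccati U U' x <= M.

Lemma riccati_derive_le (t : R) :
  -1 < t < 1 -> 8 + M < U t -> (1 - t ^ 2) * U' t <= - U t ^ 2 / 4.
Proof.
  intros Ht HUt; apply (riccati_quadratic_dominates M); [lra|lra|lra|].
  exact (riccati_le t Ht).
Qed.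

Lemma riccati_large_ge_left (x0 : R) :
  -1 < x0 < 1 -> 8 + M < U x0 -> forall t, -1 < t <= x0 -> U x0 <= U t.
Proof.
  intros Hx0 Hlarge.
  apply (ge_left_of_derive_neg_above U U' (-1) 1 (8 + M)); [exact U_derive| |lra|lra].
  intros t Ht HUt.
  pose proof (riccati_derive_le t Ht HUt).
  assert (0 < 1 - t ^ 2) by nra.
  assert (0 < U t ^ 2) by (apply pow_lt; lra).
  destruct (Rlt_or_le (U' t) 0) as [|Hnn]; [assumption|].
  assert (0 <= (1 - t ^ 2) * U' t) by (apply Rmult_le_pos; lra).
  lra.
Qed.

Lemma riccati_upper_bound (x0 : R) : -1 < x0 < 1 -> U x0 <= 8 + M.
Proof.
  intros Hx0.
  destruct (Rle_or_lt (U x0) (8 + M)) as [Hle|Hlarge]; [exact Hle|exfalso].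
  pose proof (riccati_large_ge_left x0 Hx0 Hlarge) as Habove.
  (* [ln (1 + x) = ln (1 + x0) - 1], so monotonicity gives [1/U x <= 1/U x0 - 1/8 < 0]. *)
  set (x := (1 + x0) * exp (-1) - 1).
  assert (Hexp : 0 < exp (-1) < 1).
  { split; [apply exp_pos|]. rewrite <- exp_0. apply exp_increasing; lra. }
  assert (Hx : -1 < x < x0) by (unfold x; nra).
  assert (Hlnx : ln (1 + x) = ln (1 + x0) - 1).
  { unfold x; replace (1 + ((1 + x0) * exp (-1) - 1)) with ((1 + x0) * exp (-1)) by ring.
    rewrite ln_mult, ln_exp by lra; ring. }
  assert (Hmono : / U x - ln (1 + x) / 8 <= / U x0 - ln (1 + x0) / 8).
  { apply (nondecreasing_of_derive_nonneg (fun s => / U s - ln (1 + s) / 8)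
             (fun s => - U' s / U s ^ 2 - / (8 * (1 + s)))); [lra|].
    intros t Ht.
    assert (Ht' : -1 < t < 1) by lra.
    assert (HUt : U x0 <= U t) by (apply Habove; lra).
    split.
    - apply (is_derive_minus (fun s => / U s) (fun s => ln (1 + s) / 8)).
      + apply is_derive_inv; [exact (U_derive t Ht') | lra].
      + auto_derive; [lra | field; lra].
    - apply riccati_lyapunov_derive_nonneg; [exact Ht' | lra |].
      apply riccati_derive_le; [exact Ht' | lra]. }
  assert (HUx : U x0 <= U x) by (apply Habove; lra).
  assert (/ U x0 < / 8) by (apply Rinv_lt_contravar; [nra | lra]).
  assert (0 < / U x) by (apply Rinv_0_lt_compat; lra).
  rewrite Hlnx in Hmono.
  lra.
Qed.

End RiccatiUpperBound.

Lemma riccati_lower_bound (M : R) (U U' : R -> R) :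
  0 <= M ->
  (forall x, -1 < x < 1 -> is_derive U x (U' x)) ->
  (forall x, -1 < x < 1 -> riccati U U' x <= M) ->
  forall x0, -1 < x0 < 1 -> - (8 + M) <= U x0.
Proof.
  intros HM HU Hric x0 Hx0.
  enough (Hrefl : - U (- - x0) <= 8 + M) by (rewrite Ropp_involutive in Hrefl; lra).
  apply (riccati_upper_bound M (fun y => - U (- y)) (fun y => U' (- y))); [exact HM| | |lra].
  - intros x Hx; apply is_derive_reflect, HU; lra.
  - intros x Hx; rewrite riccati_reflect; apply Hric; lra.
Qed.

Lemma le_sqrt_sq_add (a b : R) : 0 <= b -> a <= sqrt (a ^ 2 + b).
Proof.
  intros Hb.
  apply (Rle_trans _ (Rabs a)); [apply Rle_abs|].
  rewrite <- (sqrt_pow2 (Rabs a)) by apply Rabs_pos.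
  apply sqrt_le_1_alt; rewrite pow2_abs; lra.
Qed.

Lemma Pc_le_norm3 (c1 c2 c3 x : R) :
  -1 < x < 1 -> Pc c1 c2 c3 x <= 3 * norm3 c1 c2 c3.
Proof.
  intros Hx; unfold Pc, norm3.
  assert (Hc1 : c1 <= sqrt (c1 ^ 2 + c2 ^ 2 + c3 ^ 2)).
  { rewrite Rplus_assoc; apply le_sqrt_sq_add; nra. }
  assert (Hc2 : c2 <= sqrt (c1 ^ 2 + c2 ^ 2 + c3 ^ 2)).
  { replace (c1 ^ 2 + c2 ^ 2 + c3 ^ 2) with (c2 ^ 2 + (c1 ^ 2 + c3 ^ 2)) by ring.
    apply le_sqrt_sq_add; nra. }
  assert (Hc3 : c3 <= sqrt (c1 ^ 2 + c2 ^ 2 + c3 ^ 2)).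
  { replace (c1 ^ 2 + c2 ^ 2 + c3 ^ 2) with (c3 ^ 2 + (c1 ^ 2 + c2 ^ 2)) by ring.
    apply le_sqrt_sq_add; nra. }
  set (N := sqrt (c1 ^ 2 + c2 ^ 2 + c3 ^ 2)) in *.
  assert (c1 * (1 - x) <= N * (1 - x)) by (apply Rmult_le_compat_r; lra).
  assert (c2 * (1 + x) <= N * (1 + x)) by (apply Rmult_le_compat_r; lra).
  assert (Hx2 : 0 <= 1 - x ^ 2 <= 1) by nra.
  assert (c3 * (1 - x ^ 2) <= N * (1 - x ^ 2)) by (apply Rmult_le_compat_r; lra).
  assert (0 <= N) by apply sqrt_pos.
  assert (N * (1 - x ^ 2) <= N) by nra.
  lra.
Qed.

Theorem lemma2p2 :
  forall A : R, 0 < A ->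
  exists C : R,
    forall (c1 c2 c3 : R) (U U' : R -> R),
      norm3 c1 c2 c3 <= A ->
      C1_on_open_interval U U' ->
      (forall x, -1 < x < 1 ->
         (1 - x ^ 2) * U' x + 2 * x * U x + / 2 * (U x) ^ 2 = Pc c1 c2 c3 x) ->
      forall x, -1 < x < 1 -> Rabs (U x) <= C.
Proof.
  intros A HA; exists (8 + 3 * A).
  intros c1 c2 c3 U U' Hc HC1 Hode x Hx.
  assert (HU : forall y, -1 < y < 1 -> is_derive U y (U' y)) by apply HC1.
  assert (Hric : forall y, -1 < y < 1 -> riccati U U' y <= 3 * A).
  { intros y Hy; unfold riccati; rewrite Hode by exact Hy.
    pose proof (Pc_le_norm3 c1 c2 c3 y Hy); lra. }
  apply Rabs_le; split.
  - exact (riccati_lower_bound (3 * A) U U' ltac:(lra) HU Hric x Hx).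
  - exact (riccati_upper_bound (3 * A) U U' ltac:(lra) HU Hric x Hx).
Qed.
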